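(* Let $n\ge 2$ and let $S=\{s_1<\dots<s_{k_1}\}$ and $T=\{t_1<\dots<t_{k_2}\}$ be nonempty subsets of $\{1,\dots,n-1\}$ with $\max S+\min T\le n$ and $\min S+\max T\le n$. Let $D$ be the digraph of the Boolean Toeplitz matrix $T_n\langle S;T\rangle$, let $d=\gcd\{s+t : s\in S,\ t\in T\}$ and $d'=\gcd(d,s_1)$. Then (a) the matrix period of $D$ is $d/d'$; (b) the competition period of $D$ is $1$; (c) there is $M$ such that for every $m\ge M$, the $m$-step competition graph $C^m(D)$ is the disjoint union of the cliques $\{v\in[n] : v\equiv i \pmod d\}$, $1\le i\le d$ (i.e. the limit of $\{C^m(D)\}_{m\ge1}$ is this disjoint union of cliques).
   Context: Boolean arithmetic on $\{0,1\}$: $1+1=1$, usual multiplication. For nonempty $S,T\subseteq\{1,\dots,n-1\}$, $T_n\langle S;T\rangle$ is the $n\times n$ $(0,1)$-matrix whose $(i,j)$-entry is $1$ iff $j-i\in S$ or $i-j\in T$. Its digraph $D$ has vertex set $[n]=\{1,\dots,n\}$ and an arc $(i,j)$ iff the $(i,j)$-entry is $1$. The matrix period of $D$ (of its adjacency matrix $A$) is the smallest $p\ge1$ such that $A^m=A^{m+p}$ for all sufficiently large $m$ (Boolean powers). The $m$-step competition graph $C^m(D)$ is the graph on $[n]$ in which distinct $u,v$ are adjacent iff some vertex $w$ is reachable from both $u$ and $v$ by directed walks of length exactly $m$; equivalently the off-diagonal $(u,v)$-entry of $A^m(A^T)^m$ is $1$. The competition index $q$ and competition period $p$ of $A$: $q$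 is the smallest positive integer such that $A^{q+i}(A^T)^{q+i}=A^{q+r+i}(A^T)^{q+r+i}$ for some $r\ge1$ and all $i\ge0$, and $p$ is the smallest positive integer with $A^q(A^T)^q=A^{q+p}(A^T)^{q+p}$. *)

From mathcomp Require Import all_boot all_algebra.
Set Implicit Arguments. Unset Strict Implicit. Unset Printing Implicit Defensive.

(* Boolean (0,1)-matrices over 'I_n: vertex i : 'I_n represents vertex i+1 of [n]. *)
Definition bmul n (A B : 'M[bool]_n) : 'M[bool]_n :=
  \matrix_(i, j) [exists k, A i k && B k j].
Definition bid n : 'M[bool]_n := \matrix_(i, j) (i == j).
Definition bpow n (A : 'M[bool]_n) (m : nat) : 'M[bool]_n := iter m (bmul A) (bid n).

Definition toeplitz n (S T : {set 'I_n}) : 'M[bool]_n :=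
  \matrix_(i, j) ([exists s in S, (i + s == j :> nat)] ||
                  [exists t in T, (j + t == i :> nat)]).

Definition setmin n (S : {set 'I_n}) : nat := \big[minn/n]_(s in S) (s : nat).
Definition setmax n (S : {set 'I_n}) : nat := \max_(s in S) (s : nat).
Definition gcd_sums n (S T : {set 'I_n}) : nat :=
  \big[gcdn/0]_(s in S) \big[gcdn/0]_(t in T) (s + t : nat).

Definition eventually_periodic n (A : 'M[bool]_n) (p : nat) : Prop :=
  exists M, forall m, M <= m -> bpow A m = bpow A (m + p).
Definition matrix_period n (A : 'M[bool]_n) (p : nat) : Prop :=
  0 < p /\ eventually_periodic A p /\
  (forall p', 0 < p' -> eventually_periodic A p' -> p <= p').

Definition compmx n (A : 'M[bool]_n) (m : nat) : 'M[bool]_n :=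
  bmul (bpow A m) (bpow A^T m).

Definition comp_index_cond n (A : 'M[bool]_n) (q : nat) : Prop :=
  exists r, 0 < r /\ forall i, compmx A (q + i) = compmx A (q + r + i).
Definition competition_index n (A : 'M[bool]_n) (q : nat) : Prop :=
  0 < q /\ comp_index_cond A q /\
  (forall q', 0 < q' -> comp_index_cond A q' -> q <= q').
Definition competition_period n (A : 'M[bool]_n) (p : nat) : Prop :=
  exists q, competition_index A q /\
    0 < p /\ compmx A q = compmx A (q + p) /\
    (forall p', 0 < p' -> compmx A q = compmx A (q + p') -> p <= p').

Definition comp_adj n (A : 'M[bool]_n) (m : nat) (u v : 'I_n) : bool :=
  (u != v) && [exists w, bpow A m u w && bpow A m v w].

(* Modulo d every s in S is congruent to s1 = min S and every t in T to -s1, so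
   each arc of D, hence each walk of length m, goes from u to a vertex
   congruent to u + m s1.  Conversely, the two size conditions on S and T let
   a walk move by +s and -t without leaving [n]; a Euclid-type argument on such
   moves shows that u reaches every vertex congruent to u modulo d' (the gcd
   of S and T), and that every vertex lies on closed walks of every large
   length divisible by d/d'.  Hence, for large m, (A^m)_{uv} = 1 iff
   v = u + m s1 (mod d), from which the three claims are read off. *)

From mathcomp Require Import all_boot all_algebra zify.
From Stdlib Require Import Classical.
Set Implicit Arguments. Unset Strict Implicit. Unset Printing Implicit Defensive.

Lemma bpow0E n (A : 'M[bool]_n) i j : bpow A 0 i j = (i == j).
Proof. by rewrite /bpow /= /bid mxE. Qed.

Lemma bpowSE n (A : 'M[bool]_n) m i j :
  bpow A m.+1 i j = [exists k, A i k && bpow A m k j].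
Proof. by rewrite /bpow iterS /bmul mxE. Qed.

Lemma bpowDE n (A : 'M[bool]_n) m1 m2 i j :
  bpow A (m1 + m2) i j = [exists k, bpow A m1 i k && bpow A m2 k j].
Proof.
elim: m1 i j => [|m1 IH] i j.
  apply/idP/existsP => [walk_ij|[k /andP[]]]; last by rewrite bpow0E => /eqP->.
  by exists i; rewrite bpow0E eqxx.
rewrite addSn bpowSE; apply/existsP/existsP => [[k /andP[Aik]]|[k]].
  rewrite IH => /existsP[w /andP[h1 h2]]; exists w; rewrite h2 andbT bpowSE.
  by apply/existsP; exists k; rewrite Aik.
rewrite bpowSE => /andP[/existsP[w /andP[Aiw h1]] h2]; exists w.
by rewrite Aiw IH; apply/existsP; exists k; rewrite h1.
Qed.

Lemma bpow1E n (A : 'M[bool]_n) i j : bpow A 1 i j = A i j.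
Proof.
rewrite bpowSE; apply/existsP/idP => [[k]|Aij]; last by exists j; rewrite Aij bpow0E eqxx.
by rewrite bpow0E => /andP[Aik /eqP <-].
Qed.

Lemma bpow_trE n (A : 'M[bool]_n) m i j : bpow A^T m i j = bpow A m j i.
Proof.
elim: m i j => [|m IH] i j; first by rewrite !bpow0E eq_sym.
rewrite bpowSE -[in RHS]addn1 bpowDE; apply/existsP/existsP => [[k]|[k]].
  by rewrite mxE IH => /andP[Aki h]; exists k; rewrite h bpow1E Aki.
by rewrite bpow1E => /andP[h Aki]; exists k; rewrite mxE IH h Aki.
Qed.

Lemma ex_minimal (P : nat -> Prop) :
  (exists m, P m) -> exists m, P m /\ forall m', P m' -> m <= m'.
Proof.
case=> m; elim/ltn_ind: m => m IH Pm.
have [[m' [lt_m'm Pm']]|no_smaller] := classic (exists m', m' < m /\ P m').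
  exact: IH lt_m'm Pm'.
exists m; split=> // m' Pm'; rewrite leqNgt; apply/negP => lt_m'm.
by apply: no_smaller; exists m'.
Qed.

Definition eventually (P : nat -> Prop) := exists M, forall m, M <= m -> P m.

Lemma eventually_forall (I : finType) (P : I -> nat -> Prop) :
  (forall i, eventually (P i)) -> eventually (fun m => forall i, P i m).
Proof.
move=> evP; suff [M HM] : eventually (fun m => forall i, i \in enum I -> P i m).
  by exists M => m le_Mm i; apply: HM; rewrite ?mem_enum.
elim: (enum I) => [|i r [M HM]]; first by exists 0.
have [Mi HMi] := evP i; exists (maxn M Mi) => m; rewrite geq_max => /andP[le_Mm le_Mim] j.
by rewrite inE => /orP[/eqP-> | jr]; [exact: HMi | exact: HM].
Qed.

Lemma gcdn_descent (P U : nat -> Prop) c :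
  0 < c -> P c -> (forall c u, 0 < c -> P c -> U u -> P (gcdn c u)) ->
  exists2 c', 0 < c' /\ P c' & forall u, U u -> c' %| u.
Proof.
move=> + + stepP; elim/ltn_ind: c => c IH c_gt0 Pc.
have [c_dvdU|] := classic (forall u, U u -> c %| u); first by exists c.
move=> /not_all_ex_not[u /(imply_to_and (U u))[Uu /negP c_ndvd_u]].
have lt_gcd_c : gcdn c u < c.
  rewrite ltn_neqAle dvdn_leq ?dvdn_gcdl // andbT.
  by apply: contraNneq c_ndvd_u => <-; apply: dvdn_gcdr.
by apply: IH lt_gcd_c _ (stepP _ _ c_gt0 Pc Uu); rewrite gcdn_gt0 c_gt0.
Qed.

Lemma modnD_dvdr x y d : d %| y -> x + y = x %[mod d].
Proof. by move=> /divnK <-; rewrite addnC modnMDl. Qed.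

Lemma dvdn_mul_divgcd d k s : 0 < d -> (d %| k * s) = (d %/ gcdn d s %| k).
Proof.
move=> d_gt0; have g_gt0 : 0 < gcdn d s by rewrite gcdn_gt0 d_gt0.
have coprime_quo : coprime (d %/ gcdn d s) (s %/ gcdn d s).
  by rewrite /coprime -(eqn_pmul2r g_gt0) mul1n muln_gcdl !divnK ?dvdn_gcdl ?dvdn_gcdr.
move: coprime_quo (divnK (dvdn_gcdl d s)) (divnK (dvdn_gcdr d s)).
set g := gcdn d s; set d1 := d %/ g; set s1 := s %/ g => coprime_quo def_d def_s.
by rewrite -{1}def_d -def_s mulnA dvdn_pmul2r // Gauss_dvdl.
Qed.

Section Shifts.
Variables (R : nat -> nat -> Prop) (n : nat).
Hypothesis R_refl : forall x, x < n -> R x x.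
Hypothesis R_trans : forall x y z, R x y -> R y z -> R x z.

Definition shifts_up a := forall x y, x + a = y -> y < n -> R x y.
Definition shifts_down b := forall x y, x = y + b -> x < n -> R x y.
Definition shifts c := shifts_up c /\ shifts_down c.

Lemma shifts_gcd a b : 0 < a -> 0 < b -> a + b <= n ->
  shifts_up a -> shifts_down b -> shifts (gcdn a b).
Proof.
have [k] := ubnP (a + b); elim: k a b => // k IH a b lt_ab_k a_gt0 b_gt0 le_ab_n up_a down_b.
(* since a + b <= n, an up-step and a down-step can always be made in one of the two orders *)
case: (ltngtP a b) => [lt_ab|lt_ba|eq_ab]; last by rewrite -eq_ab gcdnn in down_b *.
- have down_ba : shifts_down (b - a).
    move=> x y def_x lt_xn; case: (ltnP (y + b) n) => [lt_ybn|le_ny].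
      by apply: (R_trans (y := y + b)); [apply: up_a | apply: down_b]; lia.
    by apply: (R_trans (y := y - a)); [apply: down_b | apply: up_a]; lia.
  rewrite -(subnK (ltnW lt_ab)) gcdnDr.
  by apply: IH => //; lia.
- have up_ab : shifts_up (a - b).
    move=> x y def_y lt_yn; case: (ltnP (x + a) n) => [lt_xan|le_nx].
      by apply: (R_trans (y := x + a)); [apply: up_a | apply: down_b]; lia.
    by apply: (R_trans (y := x - b)); [apply: down_b | apply: up_a]; lia.
  rewrite gcdnC -(subnK (ltnW lt_ba)) gcdnDr gcdnC.
  by apply: IH => //; lia.
Qed.

Lemma shifts_up_mul c k : shifts_up c -> shifts_up (k * c).
Proof.
move=> up_c; elim: k => [|k IH] x y def_y lt_yn.
  by move: def_y; rewrite mul0n addn0 => ->; apply: R_refl.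
by apply: (R_trans (y := x + c)); [apply: up_c | apply: IH]; rewrite ?mulSn; lia.
Qed.

Lemma shifts_down_mul c k : shifts_down c -> shifts_down (k * c).
Proof.
move=> down_c; elim: k => [|k IH] x y def_x lt_xn.
  by move: def_x lt_xn; rewrite mul0n addn0 => ->; apply: R_refl.
by apply: (R_trans (y := x - c)); [apply: down_c | apply: IH]; rewrite ?mulSn in def_x *; lia.
Qed.

Lemma shifts_modn c x y : shifts c -> x < n -> y < n -> x = y %[mod c] -> R x y.
Proof.
move=> [up_c down_c] lt_xn lt_yn /eqP eq_xy; case: (leqP x y) => [le_xy|lt_yx].
  move: eq_xy; rewrite eq_sym eqn_mod_dvd // => /divnK def_yx.
  by apply: (shifts_up_mul (k := (y - x) %/ c) up_c); rewrite ?def_yx; lia.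
move: eq_xy; rewrite eqn_mod_dvd ?(ltnW lt_yx) // => /divnK def_xy.
by apply: (shifts_down_mul (k := (x - y) %/ c) down_c); rewrite ?def_xy; lia.
Qed.

End Shifts.

Lemma gcdn_combination_eventually K g a : 0 < g -> 0 < a ->
  eventually (fun N => exists k j, K <= k /\ N * gcdn g a = k * g + j * a).
Proof.
move=> g_gt0 a_gt0; have [u v bezout _] := egcdnP a g_gt0.
have h_gt0 : 0 < gcdn g a by rewrite gcdn_gt0 g_gt0.
move: bezout (divnK (dvdn_gcdl g a)) (divnK (dvdn_gcdr g a)).
set h := gcdn g a; set g' := g %/ h; set a' := a %/ h => bezout def_g def_a.
have a'_gt0 : 0 < a' by rewrite divn_gt0 // dvdn_leq ?dvdn_gcdr.
exists (a' * (a' * v + K * g')) => N le_N0_N.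
have lt_r : N %% a' < a' by rewrite ltn_pmod.
have le_q : a' * v + K * g' <= N %/ a' by rewrite leq_divRL // mulnC.
have def_N := divn_eq N a'.
move: lt_r le_q def_N; set q := N %/ a'; set r := N %% a' => lt_r le_q def_N.
have le_rv : r * v <= a' * v by rewrite leq_mul2r (ltnW lt_r) orbT.
have [j def_q] : exists j, q = j + r * v + K * g' by exists (q - (r * v + K * g')); lia.
(* with N = q a' + r and u g = v a + h:  N h = (r u + K a') g + (q - r v - K g') a *)
exists (r * u + K * a'), j; split; first by rewrite (leq_trans _ (leq_addl _ _)) // leq_pmulr.
have r_bezout : r * (u * g) = r * (v * a + h) by rewrite bezout.
rewrite def_N def_q -def_g -def_a in r_bezout *; lia.
Qed.

Section AdditiveMonoid.
Variable Q : nat -> Prop.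
Hypotheses (Q0 : Q 0) (QD : forall a b, Q a -> Q b -> Q (a + b)).

Lemma monoid_mul k a : Q a -> Q (k * a).
Proof. by move=> Qa; elim: k => [|k IH]; rewrite ?mulSn; auto. Qed.

Lemma eventually_multiples_gcd g a : 0 < g -> 0 < a ->
  eventually (fun k => Q (k * g)) -> Q a -> eventually (fun k => Q (k * gcdn g a)).
Proof.
move=> g_gt0 a_gt0 [K HK] Qa.
have [N0 HN0] := gcdn_combination_eventually K g_gt0 a_gt0.
exists N0 => N /HN0[k [j [le_Kk ->]]].
by apply: QD; [apply: HK | apply: monoid_mul].
Qed.

End AdditiveMonoid.

Lemma competition_period_eventually_const n (A : 'M[bool]_n) C :
  eventually (fun m => compmx A m = C) -> competition_period A 1.
Proof.
move=> [M HM].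
have [q [[q_gt0 [r [r_gt0 periodic_r]]] q_min]] :
    exists q, (0 < q /\ comp_index_cond A q) /\
      forall q', 0 < q' /\ comp_index_cond A q' -> q <= q'.
  apply: ex_minimal; exists M.+1; split=> //; exists 1; split=> // i.
  by rewrite !HM //; lia.
exists q; split; first by split=> //; split=> [|q' q'_gt0 cond_q']; [exists r | exact: q_min].
have periodic_kr k i : compmx A (q + i) = compmx A (q + k * r + i).
  elim: k i => [|k IH] i; first by rewrite mul0n addn0.
  by rewrite IH -addnA periodic_r mulSn !addnA.
have le_M : M <= q + M * r by rewrite (leq_trans _ (leq_addl _ _)) // leq_pmulr.
split=> //; split=> [|p' p'_gt0 _ //].
have := periodic_kr M 0; have := periodic_kr M 1; rewrite !addn0 => -> ->.
by rewrite !HM // (leq_trans le_M (leq_addr _ _)).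
Qed.

Section WalksModulo.
Variables (n d s : nat) (A : 'M[bool]_n).
Hypotheses (d_gt0 : 0 < d) (le_dn : d <= n).
Hypothesis walksE : eventually (fun m => forall u v : 'I_n,
  bpow A m u v = (v %% d == (u + m * s) %% d)).

Lemma matrix_period_walks : matrix_period A (d %/ gcdn d s).
Proof.
have [M HM] := walksE.
have d_dvd_ps p : (d %| p * s) = (d %/ gcdn d s %| p) := dvdn_mul_divgcd p s d_gt0.
split; first by rewrite divn_gt0 ?gcdn_gt0 ?d_gt0 // dvdn_leq ?dvdn_gcdl.
split.
  exists M => m le_Mm; apply/matrixP => u v.
  rewrite !HM ?(leq_trans le_Mm (leq_addr _ _)) // mulnDl addnA.
  by rewrite (modnD_dvdr (u + m * s)) // d_dvd_ps.
move=> p' p'_gt0 [M' HM']; pose m := (M + M') * d.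
have le_Mm : M <= m by rewrite (leq_trans (leq_addr M' M)) // leq_pmulr.
have le_M'm : M' <= m by rewrite (leq_trans (leq_addl M M')) // leq_pmulr.
have d_dvd_ms : d %| m * s by rewrite mulnAC dvdn_mull.
have i0 : 'I_n := Ordinal (leq_trans d_gt0 le_dn).
have /matrixP/(_ i0 i0) := HM' m le_M'm.
rewrite !HM ?(leq_trans le_Mm (leq_addr _ _)) // mulnDl addnA addnAC.
rewrite !(modnD_dvdr _ d_dvd_ms) eqxx -{1}[i0 : nat]addn0 eqn_modDl mod0n eq_sym => /esym.
by rewrite -/(dvdn _ _) d_dvd_ps; apply: dvdn_leq.
Qed.

Lemma common_target_walks : eventually (fun m => forall u v : 'I_n,
  [exists w, bpow A m u w && bpow A m v w] = (u == v %[mod d])).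
Proof.
have [M HM] := walksE; exists M => m le_Mm u v.
apply/existsP/idP => [[w]|eq_uv].
  by rewrite !HM // => /andP[/eqP->]; rewrite eqn_modDr.
have lt_wn : (u + m * s) %% d < n by apply: leq_trans (ltn_pmod _ d_gt0) le_dn.
exists (Ordinal lt_wn); rewrite !HM //= modn_mod eqxx /=.
by rewrite -modnDml (eqP eq_uv) modnDml.
Qed.

Lemma compmx_walks : eventually (fun m =>
  compmx A m = (\matrix_(u, v) (u == v %[mod d]))%R :> 'M[bool]_n).
Proof.
have [M HM] := common_target_walks; exists M => m le_Mm.
apply/matrixP => u v; rewrite !mxE -(HM m le_Mm).
by apply: eq_existsb => w; rewrite bpow_trE.
Qed.

Lemma comp_adj_walks : eventually (fun m => forall u v : 'I_n,
  comp_adj A m u v = (u != v) && (u == v %[mod d])).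
Proof.
by have [M HM] := common_target_walks; exists M => m le_Mm u v; rewrite /comp_adj HM.
Qed.

End WalksModulo.

Lemma setmin_le n (S : {set 'I_n}) (s : 'I_n) : s \in S -> setmin S <= s.
Proof.
move=> sS; rewrite /setmin -big_filter.
have : s \in [seq i <- index_enum 'I_n | i \in S] by rewrite mem_filter sS mem_index_enum.
elim: (filter _ _) => // i r IH; rewrite inE big_cons => /orP[/eqP<- | /IH le_s].
  exact: geq_minl.
by rewrite geq_min le_s orbT.
Qed.

Lemma setmin_mem n (S : {set 'I_n}) :
  S != set0 -> exists2 s : 'I_n, s \in S & setmin S = s.
Proof.
case/set0Pn => s0 s0S.
have [min_n|//] : setmin S = n \/ exists2 s : 'I_n, s \in S & setmin S = s.
  apply: (big_ind (fun x => x = n \/ exists2 s : 'I_n, s \in S & x = s)); first by left.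
    by move=> x y Px Py; rewrite /minn; case: ifP.
  by move=> s sS; right; exists s.
by have := setmin_le s0S; rewrite min_n leqNgt ltn_ord.
Qed.

Lemma setmax_ge n (S : {set 'I_n}) (s : 'I_n) : s \in S -> s <= setmax S.
Proof. by move=> sS; rewrite /setmax (leq_bigmax_cond s). Qed.

Lemma gcd_sums_dvd n (S T : {set 'I_n}) (s t : 'I_n) :
  s \in S -> t \in T -> gcd_sums S T %| s + t.
Proof. by move=> sS tT; apply: (biggcdn_inf s) => //; apply: (biggcdn_inf t). Qed.

Lemma dvd_gcd_sums n (S T : {set 'I_n}) c :
  (forall s t : 'I_n, s \in S -> t \in T -> c %| s + t) -> c %| gcd_sums S T.
Proof.
by move=> c_dvd; apply/dvdn_biggcdP => s sS; apply/dvdn_biggcdP => t tT; apply: c_dvd.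
Qed.

Section Toeplitz.
Variable n' : nat.
Local Notation n := n'.+1.
Variables S T : {set 'I_n}.
Hypotheses (S_neq0 : S != set0) (T_neq0 : T != set0).
Hypothesis S_gt0 : forall s : 'I_n, s \in S -> 0 < s.
Hypothesis T_gt0 : forall t : 'I_n, t \in T -> 0 < t.
Hypothesis le_maxS_minT : setmax S + setmin T <= n.
Hypothesis le_minS_maxT : setmin S + setmax T <= n.
Local Notation A := (toeplitz S T).
Local Notation s1 := (setmin S).
Local Notation t1 := (setmin T).
Local Notation d := (gcd_sums S T).
Local Notation d' := (gcdn d s1).

Lemma s1_gt0 : 0 < s1.
Proof. by have [s sS ->] := setmin_mem S_neq0; apply: S_gt0. Qed.

Lemma t1_gt0 : 0 < t1.
Proof. by have [t tT ->] := setmin_mem T_neq0; apply: T_gt0. Qed.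

Lemma le_s_t1 (s : 'I_n) : s \in S -> s + t1 <= n.
Proof. by move=> sS; apply: leq_trans le_maxS_minT; rewrite leq_add2r setmax_ge. Qed.

Lemma le_s1_t (t : 'I_n) : t \in T -> s1 + t <= n.
Proof. by move=> tT; apply: leq_trans le_minS_maxT; rewrite leq_add2l setmax_ge. Qed.

Lemma d_dvd_s_t1 (s : 'I_n) : s \in S -> d %| s + t1.
Proof. by move=> sS; have [t tT ->] := setmin_mem T_neq0; apply: gcd_sums_dvd. Qed.

Lemma d_dvd_s1_t (t : 'I_n) : t \in T -> d %| s1 + t.
Proof. by move=> tT; have [s sS ->] := setmin_mem S_neq0; apply: gcd_sums_dvd. Qed.

Lemma d_dvd_s1_t1 : d %| s1 + t1.
Proof. by have [t tT ->] := setmin_mem T_neq0; apply: d_dvd_s1_t. Qed.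

Lemma d_gt0 : 0 < d.
Proof.
rewrite lt0n; apply: contraTneq d_dvd_s1_t1 => ->.
by rewrite dvd0n addn_eq0 negb_and -lt0n s1_gt0.
Qed.

Lemma d_le_n : d <= n.
Proof.
apply: leq_trans (dvdn_leq _ d_dvd_s1_t1) _; first by rewrite addn_gt0 s1_gt0.
by have [t tT ->] := setmin_mem T_neq0; apply: le_s1_t.
Qed.

Lemma d'_dvd_t1 : d' %| t1.
Proof.
by rewrite -(dvdn_addr _ (dvdn_gcdr d s1)) (dvdn_trans (dvdn_gcdl d s1) d_dvd_s1_t1).
Qed.

Lemma d'_dvd_S (s : 'I_n) : s \in S -> d' %| s.
Proof.
move=> sS; rewrite -(dvdn_addl _ d'_dvd_t1).
exact: dvdn_trans (dvdn_gcdl d s1) (d_dvd_s_t1 sS).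
Qed.

Lemma d'_dvd_T (t : 'I_n) : t \in T -> d' %| t.
Proof.
move=> tT; rewrite -(dvdn_addr _ (dvdn_gcdr d s1)).
exact: dvdn_trans (dvdn_gcdl d s1) (d_dvd_s1_t tT).
Qed.

Lemma arc_modn (i j : 'I_n) : A i j -> j = i + s1 %[mod d].
Proof.
rewrite mxE => /orP[/existsP[s /andP[sS /eqP <-]] | /existsP[t /andP[tT /eqP <-]]].
  by apply/eqP; rewrite -(eqn_modDr t1) -!addnA !(modnD_dvdr i) ?d_dvd_s_t1 ?d_dvd_s1_t1.
by rewrite -addnA (modnD_dvdr j) // addnC d_dvd_s1_t.
Qed.

Lemma bpow_modn m (i j : 'I_n) : bpow A m i j -> j = i + m * s1 %[mod d].
Proof.
elim: m i j => [|m IH] i j; first by rewrite bpow0E => /eqP->; rewrite addn0.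
rewrite bpowSE => /existsP[k /andP[/arc_modn arc_ik /IH->]].
by rewrite -modnDml arc_ik modnDml mulSn addnA.
Qed.

Definition walk m x y := [&& x < n, y < n & bpow A m (inord x) (inord y)].

Lemma walk_modn m x y : walk m x y -> y = x + m * s1 %[mod d].
Proof. by case/and3P => lt_xn lt_yn /bpow_modn; rewrite !inordK. Qed.

Lemma walk0 x : x < n -> walk 0 x x.
Proof. by move=> lt_xn; rewrite /walk lt_xn bpow0E eqxx. Qed.

Lemma walkD m1 m2 x y z : walk m1 x y -> walk m2 y z -> walk (m1 + m2) x z.
Proof.
case/and3P => lt_xn lt_yn walk_xy /and3P[_ lt_zn walk_yz].
by rewrite /walk lt_xn lt_zn bpowDE; apply/existsP; exists (inord y); rewrite walk_xy.
Qed.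

Lemma walk_up (s : 'I_n) x y : s \in S -> x + s = y -> y < n -> walk 1 x y.
Proof.
move=> sS def_y lt_yn; have lt_xn : x < n by apply: leq_ltn_trans lt_yn; rewrite -def_y leq_addr.
rewrite /walk lt_xn lt_yn bpow1E mxE; apply/orP; left; apply/existsP; exists s.
by rewrite sS /= !inordK // def_y.
Qed.

Lemma walk_down (t : 'I_n) x y : t \in T -> x = y + t -> x < n -> walk 1 x y.
Proof.
move=> tT def_x lt_xn; have lt_yn : y < n by apply: leq_ltn_trans lt_xn; rewrite def_x leq_addr.
rewrite /walk lt_xn lt_yn bpow1E mxE; apply/orP; right; apply/existsP; exists t.
by rewrite tT /= !inordK // def_x.
Qed.

(* Go down by t whenever possible, and up by s otherwise; [s + t <= n] ensures
   that one of the two moves always stays in range. *)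
Lemma walk_zigzag (s t : 'I_n) i j x y : s \in S -> t \in T -> s + t <= n ->
  x < n -> y < n -> x + i * s = y + j * t -> walk (i + j) x y.
Proof.
move=> sS tT le_stn; have [k] := ubnP (i + j).
elim: k i j x => // k IH i j x lt_ijk lt_xn lt_yn eq_xy.
have down : 0 < j -> t <= x -> walk (i + j) x y.
  case: j eq_xy lt_ijk => // j eq_xy lt_ijk _ le_tx; rewrite addnS -add1n.
  apply: (@walkD 1 _ _ (x - t)); first by apply: (walk_down tT); lia.
  by apply: IH; rewrite ?mulSn in eq_xy; lia.
have up : 0 < i -> x + s < n -> walk (i + j) x y.
  case: i {down} eq_xy lt_ijk => // i eq_xy lt_ijk _ lt_xsn; rewrite addSn -add1n.
  apply: (@walkD 1 _ _ (x + s)); first exact: (walk_up sS).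
  by apply: IH; rewrite ?mulSn in eq_xy; lia.
have le_s_is : 0 < i -> s <= i * s by move=> i_gt0; rewrite leq_pmull.
have le_t_jt : 0 < j -> t <= j * t by move=> j_gt0; rewrite leq_pmull.
have [i0|i_gt0] := posnP i; have [j0|j_gt0] := posnP j.
- by move: eq_xy; rewrite i0 j0 !addn0 => ->; apply: walk0.
- by apply: down => //; have := le_t_jt j_gt0; lia.
- by apply: up => //; have := le_s_is i_gt0; lia.
- by have [le_tx|lt_xt] := leqP t x; [apply: down | apply: up => //; lia].
Qed.

Lemma closed_walk_pair (s t : 'I_n) x : s \in S -> t \in T -> s + t <= n ->
  x < n -> walk ((s + t) %/ gcdn s t) x x.
Proof.
move=> sS tT le_stn lt_xn; rewrite divnDl ?dvdn_gcdl // addnC.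
apply: (walk_zigzag sS tT) => //.
by rewrite [_ * s]mulnC [_ * t]mulnC muln_divCA_gcd.
Qed.

Definition reachable x y := exists m, walk m x y.

Lemma reachable_refl x : x < n -> reachable x x.
Proof. by exists 0; apply: walk0. Qed.

Lemma reachable_trans x y z : reachable x y -> reachable y z -> reachable x z.
Proof. by move=> [m1 walk_xy] [m2 walk_yz]; exists (m1 + m2); apply: walkD walk_xy walk_yz. Qed.

Lemma shifts_gcd_pair (s t : 'I_n) : s \in S -> t \in T -> s + t <= n ->
  shifts reachable n (gcdn s t).
Proof.
move=> sS tT le_stn.
apply: (shifts_gcd (@reachable_trans) (S_gt0 sS) (T_gt0 tT) le_stn) => x y def_xy lt_n.
  by exists 1; apply: walk_up sS def_xy lt_n.
by exists 1; apply: walk_down tT def_xy lt_n.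
Qed.

Lemma shifts_gcd_step c (u : nat) : 0 < c ->
  [/\ c %| s1, c %| t1 & shifts reachable n c] ->
  (exists2 s : 'I_n, s \in S & u = s) \/ (exists2 t : 'I_n, t \in T & u = t) ->
  [/\ gcdn c u %| s1, gcdn c u %| t1 & shifts reachable n (gcdn c u)].
Proof.
move=> c_gt0 [c_s1 c_t1 [up_c down_c]] Uu.
split; try exact: dvdn_trans (dvdn_gcdl c u) _.
have le_c_s1 : c <= s1 := dvdn_leq s1_gt0 c_s1.
have le_c_t1 : c <= t1 := dvdn_leq t1_gt0 c_t1.
have [s1' s1S def_s1] := setmin_mem S_neq0; have [t1' t1T def_t1] := setmin_mem T_neq0.
rewrite def_s1 in c_s1 le_c_s1; rewrite def_t1 in c_t1 le_c_t1.
(* pairing u with t1 (resp. s1), which c already divides, does not change gcdn c u *)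
case: Uu => [[s sS ->] | [t tT ->]].
- have le_st1 : s + t1' <= n by rewrite -def_t1 le_s_t1.
  have [_ down_st] := shifts_gcd_pair sS t1T le_st1.
  suff: shifts reachable n (gcdn c (gcdn s t1')).
    by rewrite gcdnCA (gcdn_idPl c_t1) gcdnC.
  apply: (shifts_gcd (@reachable_trans) c_gt0 _ _ up_c down_st); first by rewrite gcdn_gt0 S_gt0.
  apply: leq_trans (le_s1_t t1T); rewrite def_s1.
  by rewrite leq_add // dvdn_leq ?dvdn_gcdr // -def_t1 t1_gt0.
- have le_s1t : s1' + t <= n by rewrite -def_s1 le_s1_t.
  have [_ down_st] := shifts_gcd_pair s1S tT le_s1t.
  suff: shifts reachable n (gcdn c (gcdn s1' t)).
    by rewrite gcdnA (gcdn_idPl c_s1).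
  apply: (shifts_gcd (@reachable_trans) c_gt0 _ _ up_c down_st).
    by rewrite gcdn_gt0 -def_s1 s1_gt0.
  apply: leq_trans (le_s1_t t1T); rewrite addnC def_s1.
  by rewrite leq_add // dvdn_leq ?dvdn_gcdl // -def_s1 s1_gt0.
Qed.

Lemma reachable_modn x y : x < n -> y < n -> x = y %[mod d'] -> reachable x y.
Proof.
move=> lt_xn lt_yn eq_xy.
have [s1' s1S def_s1] := setmin_mem S_neq0; have [t1' t1T def_t1] := setmin_mem T_neq0.
have shifts_s1t1 : shifts reachable n (gcdn s1 t1).
  by rewrite def_s1 def_t1; apply: shifts_gcd_pair; rewrite // -def_s1 le_s1_t.
have g_gt0 : 0 < gcdn s1 t1 by rewrite gcdn_gt0 s1_gt0.
have [c [c_gt0 [c_s1 _ shifts_c]] c_dvd] :=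
  gcdn_descent g_gt0 (And3 (dvdn_gcdl s1 t1) (dvdn_gcdr s1 t1) shifts_s1t1) shifts_gcd_step.
have c_dvd_d' : c %| d'.
  rewrite dvdn_gcd c_s1 andbT; apply: dvd_gcd_sums => s t sS tT.
  by rewrite dvdn_add ?c_dvd //; [left; exists s | right; exists t].
apply: (shifts_modn (@reachable_refl) (@reachable_trans) shifts_c lt_xn lt_yn).
by rewrite -(modn_dvdm x c_dvd_d') eq_xy modn_dvdm.
Qed.

Definition closed_walks L := forall x, x < n -> walk L x x.

Lemma closed_walks0 : closed_walks 0.
Proof. exact: walk0. Qed.

Lemma closed_walksD a b : closed_walks a -> closed_walks b -> closed_walks (a + b).
Proof.
by move=> closed_a closed_b x lt_xn; apply: walkD (closed_a x lt_xn) (closed_b x lt_xn).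
Qed.

Lemma dvdn_cycle_lengths g :
  (forall s : 'I_n, s \in S -> g %| (s + t1) %/ gcdn s t1) ->
  (forall t : 'I_n, t \in T -> g %| (s1 + t) %/ gcdn s1 t) ->
  g %| d %/ d'.
Proof.
move=> g_S g_T.
have lift u v : d' %| u -> d' %| v -> g %| (u + v) %/ gcdn u v -> g * d' %| u + v.
  move=> d'_u d'_v g_uv; have h_uv : gcdn u v %| u + v by rewrite dvdn_add ?dvdn_gcdl ?dvdn_gcdr.
  by rewrite -(divnK h_uv) dvdn_mul // dvdn_gcd d'_u.
have [s1' s1S def_s1] := setmin_mem S_neq0.
have gd'_s1t1 : g * d' %| s1 + t1.
  by apply: lift; rewrite ?dvdn_gcdr ?d'_dvd_t1 // def_s1 g_S.
rewrite dvdn_divRL ?dvdn_gcdl //; apply: dvd_gcd_sums => s t sS tT.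
(* s + t = (s + t1) + (s1 + t) - (s1 + t1) *)
rewrite -(dvdn_addl _ gd'_s1t1) [s1 + t1]addnC addnACA [t + s1]addnC.
by apply: dvdn_add; apply: lift; [exact: d'_dvd_S | exact: d'_dvd_t1 | exact: g_S
                                 | exact: dvdn_gcdr | exact: d'_dvd_T | exact: g_T].
Qed.

Lemma closed_walks_eventually :
  exists2 g, 0 < g /\ g %| d %/ d' & eventually (fun k => closed_walks (k * g)).
Proof.
have [s1' s1S def_s1] := setmin_mem S_neq0; have [t1' t1T def_t1] := setmin_mem T_neq0.
pose U u := (exists2 s : 'I_n, s \in S & u = (s + t1) %/ gcdn s t1) \/
            (exists2 t : 'I_n, t \in T & u = (s1 + t) %/ gcdn s1 t).
have U_closed u : U u -> 0 < u /\ closed_walks u.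
  have cycle_pair (s t : 'I_n) : s \in S -> t \in T -> s + t <= n ->
      0 < (s + t) %/ gcdn s t /\ closed_walks ((s + t) %/ gcdn s t).
    move=> sS tT le_stn; split; last by move=> x; apply: closed_walk_pair.
    rewrite divn_gt0 ?gcdn_gt0 ?(S_gt0 sS) //.
    exact: leq_trans (dvdn_leq (S_gt0 sS) (dvdn_gcdl s t)) (leq_addr t s).
  case=> [[s sS ->] | [t tT ->]].
    by rewrite def_t1; apply: cycle_pair; rewrite // -def_t1 le_s_t1.
  by rewrite def_s1; apply: cycle_pair; rewrite // -def_s1 le_s1_t.
have U_s1t1 : U ((s1 + t1) %/ gcdn s1 t1) by left; exists s1'; rewrite ?def_s1.
have [g0_gt0 closed_g0] := U_closed _ U_s1t1.
have step c u : 0 < c -> eventually (fun k => closed_walks (k * c)) -> U u ->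
    eventually (fun k => closed_walks (k * gcdn c u)).
  move=> c_gt0 closed_c /U_closed[u_gt0 closed_u].
  exact: (eventually_multiples_gcd (Q := closed_walks) closed_walks0 (@closed_walksD)
            c_gt0 u_gt0 closed_c closed_u).
have closed_mul_g0 : eventually (fun k => closed_walks (k * ((s1 + t1) %/ gcdn s1 t1))).
  by exists 0 => k _; apply: (monoid_mul (Q := closed_walks) closed_walks0 (@closed_walksD)).
have [g [g_gt0 closed_g] g_dvd] := gcdn_descent g0_gt0 closed_mul_g0 step.
exists g => //; split=> //; apply: dvdn_cycle_lengths => [s sS|t tT]; apply: g_dvd.
  by left; exists s.
by right; exists t.
Qed.

Lemma walk_bpow m (u v : 'I_n) : walk m u v = bpow A m u v.
Proof. by rewrite /walk !ltn_ord !inord_val. Qed.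

Lemma bpow_modn_eventually (u v : 'I_n) :
  eventually (fun m => bpow A m u v = (v == u + m * s1 %[mod d])).
Proof.
have d'_dvd_d : d' %| d := dvdn_gcdl d s1.
have [u_v|u_nv] := boolP (u == v %[mod d']); last first.
  exists 0 => m _; apply/idP/idP => [/bpow_modn/eqP // | /eqP eq_v].
  case/negP: u_nv; rewrite eq_sym -(modn_dvdm v d'_dvd_d) eq_v modn_dvdm //.
  by rewrite (modnD_dvdr u) // dvdn_mull // dvdn_gcdr.
have [l walk_l] := reachable_modn (ltn_ord u) (ltn_ord v) (eqP u_v).
have [g [g_gt0 g_dvd] [K closed_Kg]] := closed_walks_eventually.
exists (l + K * g) => m le_m; apply/idP/idP => [/bpow_modn/eqP // | /eqP eq_v].
have le_lm : l <= m by apply: leq_trans le_m; apply: leq_addr.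
(* the residue condition forces d / d' | m - l: pad the walk of length l with closed walks *)
have d_dvd_ml : d %| (m - l) * s1.
  have := walk_modn walk_l; rewrite -(subnKC le_lm) mulnDl addnA in eq_v.
  by move/eqP; rewrite eq_v -{2}[u + l * s1]addn0 eqn_modDl mod0n.
have g_dvd_ml : g %| m - l by apply: dvdn_trans g_dvd _; rewrite -dvdn_mul_divgcd ?d_gt0.
have def_m : m = l + (m - l) %/ g * g by rewrite divnK // subnKC.
rewrite -walk_bpow def_m; apply: walkD walk_l (closed_Kg _ _ _ (ltn_ord v)).
by rewrite leq_divRL // leq_subRL // addnC.
Qed.

Lemma bpow_eventually :
  eventually (fun m => forall u v : 'I_n, bpow A m u v = (v == u + m * s1 %[mod d])).
Proof.
have [M HM] := eventually_forall (fun uv : 'I_n * 'I_n => bpow_modn_eventually uv.1 uv.2).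
by exists M => m le_Mm u v; apply: (HM m le_Mm (u, v)).
Qed.

End Toeplitz.

Theorem theoremA (n : nat) (S T : {set 'I_n}) :
  2 <= n ->
  S != set0 -> T != set0 ->
  (forall s : 'I_n, s \in S -> 0 < s) ->
  (forall t : 'I_n, t \in T -> 0 < t) ->
  setmax S + setmin T <= n ->
  setmin S + setmax T <= n ->
  let A := toeplitz S T in
  let d := gcd_sums S T in
  let d' := gcdn d (setmin S) in
  [/\ matrix_period A (d %/ d'),
      competition_period A 1 &
      exists M, forall m, M <= m -> forall u v : 'I_n,
        comp_adj A m u v = (u != v) && (u %% d == v %% d)].
Proof.
case: n S T => [|n'] S T; first by [].
move=> _ S_neq0 T_neq0 S_gt0 T_gt0 le_maxS_minT le_minS_maxT A d d'.
have d_gt0 : 0 < d by exact: d_gt0.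
have d_le_n : d <= n'.+1 by exact: d_le_n.
have walksE := bpow_eventually S_neq0 T_neq0 S_gt0 T_gt0 le_maxS_minT le_minS_maxT.
split.
- exact: matrix_period_walks walksE.
- exact: competition_period_eventually_const (compmx_walks d_gt0 d_le_n walksE).
- exact: comp_adj_walks d_gt0 d_le_n walksE.
Qed.
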